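(* For every $n\ge 1$ and every $A$ as in the context there exists $\mathrm{Single}(n,A)\in A\cup\{\infty\}$ such that, for every positive integer $x$, the position $P_x$ of $\mathrm{AGG}(n,A)$ consisting of one tile of value $x$ and $n-1$ empty cells is reachable if and only if $x\in A$ and $x\le \mathrm{Single}(n,A)$. In particular, if $\mathrm{Single}(n,A)$ is finite it is the largest value of a single tile achievable in $\mathrm{AGG}(n,A)$, and if it is $\infty$ then every value in $A$ is achievable as a single tile.
   Context: Let $A$ be a set of positive integers with $1\in A$ (the allowed tile values). For an integer $n\ge 0$, the abstract generalized 2048 game $\mathrm{AGG}(n,A)$ is played on $n$ indistinguishable cells. A position assigns to each cell either nothing (the cell is empty) or a tile carrying a value in $A$. The initial position has all cells empty. A step, which can be performed from any position having at least one empty cell, consists of: (i) placing a new tile of value $1$ into a chosen empty cell; then (ii) optionally choosing any collection of pairwise disjoint sets of nonempty cells such that the sum of the tile values in each chosen set belongs to $A$, and merging each chosen set into a single tile, whose value is that sum, placed in one cell of the set, the other cells of the set becoming empty. The game ends when, after a step, all cells are nonempty (no further step is then possible). A position is reachable if it can be obtained from the initial position by a finite sequence of steps. *)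

From mathcomp Require Import all_boot.
From Stdlib Require Import Relations.
Set Implicit Arguments. Unset Strict Implicit. Unset Printing Implicit Defensive.

(* A position of AGG(n,A): the cells are indistinguishable, so a position is
   the multiset of the values of its (nonempty) tiles, represented as a
   [seq nat] considered up to permutation; the remaining n - size p cells
   are empty. *)
Definition position := seq nat.

(* One step from p to q in AGG(n,A): p has an empty cell (size p < n); a tile
   of value 1 is placed, giving the tiles [1 :: p]; then the tiles are
   partitioned into nonempty groups [gs]; each group of size >= 2 is a chosen
   set that is merged (its sum must lie in A), singleton groups are the
   untouched tiles (merging a singleton set changes nothing). *)
Definition agg_step (n : nat) (A : nat -> Prop) (p q : position) : Prop :=
  size p < n /\
  exists gs : seq (seq nat),
    [/\ perm_eq (flatten gs) (1 :: p),
        (forall g, g \in gs -> g != [::]),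
        (forall g, g \in gs -> size g = 1 \/ A (sumn g)) &
        perm_eq q (map sumn gs)].

Definition agg_reachable (n : nat) (A : nat -> Prop) (p : position) : Prop :=
  clos_refl_trans position (agg_step n A) [::] p.

(* Single(n,A) \in A \cup {oo}: [None] encodes oo. *)
Definition le_ext (x : nat) (s : option nat) : Prop :=
  match s with Some m => x <= m | None => True end.

(* After k steps the tiles sum to k, since each step adds a tile 1 and merging
   preserves the total.  Hence if a single tile x is reachable, then for every
   y <= x the position reached after y - 1 steps still has an empty cell, and
   placing a 1 and merging all its tiles yields a single tile y, provided y is
   in A.  So the reachable single tiles are exactly the values of A below some
   threshold in nat \cup {oo}: the supremum of the reachable single tiles. *)
From Stdlib Require Import Relations Classical.
From mathcomp Require Import all_boot.

Set Implicit Arguments.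
Unset Strict Implicit.
Unset Printing Implicit Defensive.

Lemma bounded_has_max (R : nat -> Prop) (m : nat) :
  (exists x, R x) -> (forall x, R x -> x <= m) ->
  exists s, R s /\ forall x, R x -> x <= s.
Proof.
elim: m => [|m IHm] [x Rx] boundR.
  exists x; split=> // y Ry.
  by move: (boundR x Rx) (boundR y Ry); rewrite !leqn0 => /eqP-> /eqP->.
have [Rm1 | notRm1] := classic (R m.+1); first by exists m.+1.
apply: IHm; first by exists x.
move=> y Ry; have := boundR y Ry; rewrite leq_eqVlt => /orP[/eqP eq_y | //].
by rewrite eq_y in Ry.
Qed.

Lemma exists_sup_ext (R : nat -> Prop) :
  (exists x, R x) ->
  exists S : option nat,
    (forall s, S = Some s -> R s) /\
    (forall x, (exists2 y, R y & x <= y) <-> le_ext x S).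
Proof.
move=> exR.
have [[m boundR] | unbounded] := classic (exists m, forall x, R x -> x <= m).
  have [s [Rs maxs]] := bounded_has_max exR boundR.
  exists (Some s); split=> [_ [<-] // | x /=]; split=> [[y Ry le_xy] | le_xs].
    exact: leq_trans le_xy (maxs y Ry).
  by exists s.
exists None; split=> // x; split=> // _.
apply: NNPP => noR; apply: unbounded; exists x => y Ry.
by rewrite leqNgt; apply/negP => lt_xy; apply: noR; exists y => //; apply: ltnW.
Qed.

Section Game.
Variables (n : nat) (A : nat -> Prop).

Inductive agg_reachable_in : nat -> position -> Prop :=
| agg_reachable_in0 : agg_reachable_in 0 [::]
| agg_reachable_inS k p q :
    agg_reachable_in k p -> agg_step n A p q -> agg_reachable_in k.+1 q.

Lemma agg_step_sumn p q : agg_step n A p q -> sumn q = (sumn p).+1.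
Proof.
case=> _ [gs [perm_gs _ _ perm_q]].
by rewrite (perm_sumn perm_q) -sumn_flatten (perm_sumn perm_gs) /= add1n.
Qed.

Lemma agg_reachable_in_sumn k p : agg_reachable_in k p -> sumn p = k.
Proof. by elim=> // k' p' q _ IH /agg_step_sumn ->; rewrite IH. Qed.

Lemma agg_reachableP p : agg_reachable n A p <-> exists k, agg_reachable_in k p.
Proof.
split=> [reach_p | [k]].
  elim: (clos_rt_rtn1 _ _ _ _ reach_p) => [|q r step _ [k reach_q]].
    by exists 0; constructor.
  by exists k.+1; apply: agg_reachable_inS step.
elim=> [|k' p' q _ IH step]; first exact: rt_refl.
exact: rt_trans IH (rt_step _ _ _ _ step).
Qed.

Lemma agg_reachable_in_prefix k p j :
  agg_reachable_in k p -> j < k -> exists2 q, agg_reachable_in j q & size q < n.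
Proof.
move=> reach; elim: reach => // k' p' q reach_p' IH [size_p' _].
rewrite ltnS leq_eqVlt => /orP[/eqP -> | lt_jk]; first by exists p'.
exact: IH.
Qed.

Lemma agg_step_merge_all q :
  size q < n -> A (sumn q).+1 -> agg_step n A q [:: (sumn q).+1].
Proof.
move=> size_q Asum; split=> //; exists [:: 1 :: q]; split.
- by rewrite /= cats0.
- by move=> g; rewrite inE => /eqP ->.
- by move=> g; rewrite inE => /eqP ->; right.
- by rewrite /= add1n.
Qed.

Lemma agg_step_single p x : A 1 -> agg_step n A p [:: x] -> A x.
Proof.
move=> A1 [_ [[|g [|g' gs]] [perm_gs _ sizeA perm_x]]];
  try by have := perm_size perm_x.
have : x \in [:: sumn g] by rewrite -(perm_mem perm_x) mem_head.
rewrite inE => /eqP ->.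
have [size_g | //] := sizeA g (mem_head _ _).
move: perm_gs; rewrite /= cats0 => perm_g.
have := perm_size perm_g; rewrite size_g; case: p perm_g => // perm_g _.
by rewrite (perm_sumn perm_g).
Qed.

Lemma agg_reachable_single_in_A x : A 1 -> agg_reachable n A [:: x] -> A x.
Proof.
move=> A1 /agg_reachableP[k reach_x].
inversion reach_x as [|k' p q _ step]; exact: agg_step_single step.
Qed.

Lemma agg_reachable_one : 0 < n -> A 1 -> agg_reachable n A [:: 1].
Proof. by move=> n_gt0 A1; apply: rt_step (agg_step_merge_all (q:=[::]) _ _). Qed.

Lemma agg_reachable_single_downward x y :
  agg_reachable n A [:: x] -> A y -> 0 < y -> y <= x -> agg_reachable n A [:: y].
Proof.
move=> /agg_reachableP[k reach_x] Ay y_gt0 le_yx.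
have k_eq_x : k = x by rewrite -(agg_reachable_in_sumn reach_x) /= addn0.
rewrite k_eq_x in reach_x.
have lt_pred_y : y.-1 < x by rewrite (leq_trans _ le_yx) // ltn_predL.
have [q reach_q size_q] := agg_reachable_in_prefix reach_x lt_pred_y.
have sumn_q : (sumn q).+1 = y by rewrite (agg_reachable_in_sumn reach_q) prednK.
rewrite -sumn_q; apply: rt_trans (rt_step _ _ _ _ (agg_step_merge_all size_q _)).
  by apply/agg_reachableP; exists y.-1.
by rewrite sumn_q.
Qed.

End Game.

Theorem mainTheorem4 (n : nat) (A : nat -> Prop)
  (hn : 1 <= n) (hA1 : A 1) (hApos : forall a, A a -> 0 < a) :
  exists S : option nat,
    (forall s, S = Some s -> A s) /\
    (forall x, 0 < x -> (agg_reachable n A [:: x] <-> A x /\ le_ext x S)).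
Proof.
have [S [S_reachable supS]] :=
  @exists_sup_ext (fun x => agg_reachable n A [:: x])
    (ex_intro _ 1 (agg_reachable_one hn hA1)).
exists S; split=> [s /S_reachable | x x_gt0].
  exact: agg_reachable_single_in_A.
split=> [reach_x | [Ax /supS[y reach_y le_xy]]].
  by split; [exact: agg_reachable_single_in_A reach_x | apply/supS; exists x].
exact: agg_reachable_single_downward reach_y Ax x_gt0 le_xy.
Qed.
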